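(* Suppose $A\oplus C=\mathbb Z$, where $A$ is a finite set of nonnegative integers, $k>1$, and $C\subseteq k\mathbb Z$. For $i=0,1,\dots,k-1$ let $A_i=\{a\in A: a\equiv i\pmod k\}$, $a_i=\min(A_i)$, and $\bar A_i=\{(a-a_i)/k: a\in A_i\}$. Then: (1) $A(x)=x^{a_0}\bar A_0(x^k)+x^{a_1}\bar A_1(x^k)+\dots+x^{a_{k-1}}\bar A_{k-1}(x^k)$; (2) every $\bar A_i\oplus C/k=\mathbb Z$, where $C/k=\{c/k:c\in C\}$; (3) every $\#\bar A_i=(\#A)/k$; (4) $S_{\bar A_0}=S_{\bar A_1}=\dots=S_{\bar A_{k-1}}$; (5) when $k$ is prime, $S_A=\{k\}\cup S_{k\bar A_0}$ (where $k\bar A_0=\{ka:a\in\bar A_0\}$), and if every $\bar A_i(x)$ satisfies (T2), then $A(x)$ satisfies (T2).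
   Context: $A\oplus C=\mathbb Z$ means every integer is uniquely $a+c$ with $a\in A$, $c\in C$. For a finite set $X$ of nonnegative integers, $X(x)=\sum_{a\in X}x^a$ and $S_X$ is the set of prime powers $s=p^\alpha$ ($p$ prime, $\alpha\ge1$) such that the cyclotomic polynomial $\Phi_s(x)$ divides $X(x)$. $X(x)$ satisfies (T2) if whenever $s_1,\dots,s_m\in S_X$ are powers of distinct primes, $\Phi_{s_1\cdots s_m}(x)$ divides $X(x)$. *)

From HB Require Import structures.
From mathcomp Require Import all_boot all_order all_algebra all_field.
Set Implicit Arguments. Unset Strict Implicit. Unset Printing Implicit Defensive.
Import Order.TTheory GRing.Theory Num.Theory.
Local Open Scope ring_scope.

(* Finite sets of nonnegative integers are represented by duplicate-free seq nat. *)

Definition tiles (A : seq nat) (C : int -> Prop) : Prop :=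
  forall z : int, exists! p : nat * int,
    p.1 \in A /\ C p.2 /\ z = (p.1%:Z + p.2)%R.

Definition maskpoly (X : seq nat) : {poly int} := \sum_(a <- X) 'X^a.

Definition prime_power (s : nat) : Prop :=
  exists p alpha : nat, prime p /\ (0 < alpha)%N /\ s = (p ^ alpha)%N.

Definition SX (X : seq nat) (s : nat) : Prop :=
  prime_power s /\ ('Phi_s %| maskpoly X).

(* (T2): for s_1..s_m in S_X (m >= 1) powers of distinct primes,
   Phi_{s_1...s_m} divides X(x).  pdiv (p^alpha) = p. *)
Definition T2 (X : seq nat) : Prop :=
  forall ss : seq nat, ss != [::] ->
    (forall s, s \in ss -> SX X s) ->
    uniq (map pdiv ss) ->
    'Phi_(\prod_(s <- ss) s)%N %| maskpoly X.

Definition Ares (A : seq nat) (k i : nat) : seq nat :=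
  [seq a <- A | a %% k == i]%N.

Definition seqmin (s : seq nat) : nat := foldr minn (head 0%N s) s.

Definition amin (A : seq nat) (k i : nat) : nat := seqmin (Ares A k i).

Definition Abar (A : seq nat) (k i : nat) : seq nat :=
  undup [seq ((a - amin A k i) %/ k)%N | a <- Ares A k i].

(* C/k = {c/k : c in C} (for C inside kZ) *)
Definition Cdiv (C : int -> Prop) (k : nat) : int -> Prop :=
  fun z => C (k%:Z * z)%R.

Definition scaleset (k : nat) (X : seq nat) : seq nat := [seq (k * a)%N | a <- X].

From HB Require Import structures.
From mathcomp Require Import all_boot all_order all_algebra all_field.
From mathcomp Require Import zify boolp.
Import Order.TTheory GRing.Theory Num.Theory.
Local Open Scope ring_scope.
Set Implicit Arguments. Unset Strict Implicit.

(* Grouping the elements of A by residue mod k gives (1); since C is contained in kZ, the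
   translates a + C with a = i mod k cover exactly the class i + kZ, so shifting by a_i and
   dividing by k shows that every Abar_i tiles Z with C/k (2).
   By Newman's theorem C/k has a period P.  With the fundamental domain W of C/k in [0, P),
   each Abar_i (+) W tiles Z/PZ and A (+) kW tiles Z/kPZ.  For a tiling X (+) Y of Z/NZ the
   Coven-Meyerowitz counting argument gives |X||Y| = N and S_X = {s | N : s not in S_Y}, so
   |Abar_i| and S_Abar_i depend only on P and W: this is (3) and (4).  Comparing S_A with
   S_Abar_0 through Phi_s | X(x^k) <-> Phi_(s / gcd(k, s)) | X gives (5).  For (T2), write
   A(z) = sum_i z^a_i Abar_i(z^k) at a primitive n-th root z with n = s_1 ... s_m: then z^k is
   a primitive (n / gcd(k, n))-th root and n / gcd(k, n) is again a product of elements of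
   S_Abar_0 = S_Abar_i with distinct primes, so every Abar_i(z^k) vanishes (unless n = k,
   and k lies in S_A anyway). *)

Lemma count_iota_partition (a b : pred nat) e N : (e <= N)%N ->
  {in iota 1 e, forall j, a j || b j} ->
  (count a (iota 1 N) + count b (iota 1 N) <= e)%N ->
  {in iota 1 N, forall j, a j = (j <= e)%N && ~~ b j}.
Proof.
move=> le_eN cover count_le.
have iota_split : iota 1 N = iota 1 e ++ iota e.+1 (N - e).
  by rewrite -iotaD subnKC // add1n.
have cover_count : count (predU a b) (iota 1 e) = e.
  by rewrite (@eq_in_count _ _ predT) ?count_predT ?size_iota.
have := count_predUI a b (iota 1 N).
rewrite {1}iota_split count_cat cover_count => counts.
have /hasPn outside : ~~ has (predU a b) (iota e.+1 (N - e)) by rewrite has_count; lia.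
have /hasPn disjoint : ~~ has (predI a b) (iota 1 N) by rewrite has_count; lia.
move=> j j_N; have /= not_both := disjoint j j_N.
move: j_N; rewrite mem_iota => j_N; have [j_le_e|j_gt_e] := leqP j e.
  have a_or_b : a j || b j by apply: cover; rewrite mem_iota; lia.
  by move: not_both a_or_b; case: (a j); case: (b j).
have /= : ~~ (a j || b j) by apply: outside; rewrite mem_iota; lia.
by rewrite negb_or => /andP[/negbTE -> _].
Qed.

Lemma seqminP (s : seq nat) : s != [::] ->
  seqmin s \in s /\ {in s, forall x, (seqmin s <= x)%N}.
Proof.
case: s => // x0 s _; rewrite /seqmin /=.
suff : foldr minn x0 s \in x0 :: s /\ {in s, forall x, (foldr minn x0 s <= x)%N}.
  case=> mem_min le_min; split.
    by case: leqP => _; rewrite ?mem_head // inE mem_min orbT.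
  move=> x; rewrite inE => /predU1P[->|/le_min]; first exact: geq_minl.
  by apply: leq_trans; exact: geq_minr.
elim: s => [|y s [IH1 IH2]] /=; first by rewrite mem_head.
split.
  case: leqP => _; rewrite !inE ?eqxx ?orbT //.
  by move: IH1; rewrite inE => /orP[->|->]; rewrite ?orbT.
move=> x; rewrite inE => /predU1P[->|/IH2]; first exact: geq_minl.
by apply: leq_trans; exact: geq_minr.
Qed.

Lemma bigmax_seq_mem (s : seq nat) : s != [::] -> (\max_(x <- s) x)%N \in s.
Proof.
elim: s => // x s IH _; rewrite big_cons inE.
have [->|/IH s_max] := eqVneq s [::]; first by rewrite big_nil maxn0 eqxx.
by rewrite /maxn; case: ltnP; rewrite ?eqxx ?s_max ?orbT.
Qed.

Lemma prime_power_gt1 s : prime_power s -> (1 < s)%N.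
Proof.
move=> [p [t [p_prime [t_gt0 ->]]]].
by rewrite -(expn0 p) ltn_exp2l ?prime_gt1.
Qed.

Lemma dvdn_prime_power k s : prime k -> prime_power s -> (k %| s)%N = (pdiv s == k).
Proof.
move=> k_prime [p [t [p_prime [t_gt0 ->]]]].
by rewrite Euclid_dvdX // t_gt0 andbT dvdn_prime2 // -(prednK t_gt0) pdiv_pfactor // eq_sym.
Qed.

Lemma div_gcdn_prime k s : prime k -> (s %/ gcdn k s = if k %| s then s %/ k else s)%N.
Proof.
move=> k_prime; case: ifP => [/gcdn_idPl -> //|k_ndvd].
have /eqP -> : coprime k s by rewrite prime_coprime // k_ndvd.
exact: divn1.
Qed.

Lemma dvdn_div_gcdn_prime k s P : prime k -> (s %/ gcdn k s %| P)%N = (s %| k * P)%N.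
Proof.
move=> k_prime; rewrite div_gcdn_prime //; case: ifPn => [k_dvd|k_ndvd].
  by rewrite dvdn_divLR ?prime_gt0 // mulnC.
by rewrite Gauss_dvdr // coprime_sym prime_coprime.
Qed.

Lemma prime_power_div_gcdn k s : prime k -> prime_power s -> s != k ->
  prime_power (s %/ gcdn k s) /\ pdiv (s %/ gcdn k s) = pdiv s.
Proof.
move=> k_prime s_pp s_neq_k; rewrite div_gcdn_prime //; case: ifP => // k_dvd.
have [p [t [p_prime [t_gt0 s_eq]]]] := s_pp.
have p_eq_k : p = k.
  by apply/eqP; rewrite eq_sym -dvdn_prime2 //; move: k_dvd; rewrite s_eq Euclid_dvdX // => /andP[].
subst s p; have t_gt1 : (1 < t)%N.
  by rewrite ltn_neqAle t_gt0 andbT; apply: contraNneq s_neq_k => <-; rewrite expn1.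
have pdiv_pow u : (0 < u)%N -> pdiv (k ^ u) = k.
  by move=> u_gt0; rewrite -(prednK u_gt0) pdiv_pfactor.
have t1_gt0 : (0 < t.-1)%N by lia.
rewrite (pdiv_pow t) // -(prednK t_gt0) expnS mulKn ?prime_gt0 // pdiv_pow //.
by split=> //; exists k, t.-1.
Qed.

Lemma prod_div_gcdn_prime k (ss : seq nat) : prime k ->
  (count (dvdn k) ss <= 1)%N ->
  ((\prod_(s <- ss) s) %/ gcdn k (\prod_(s <- ss) s) = \prod_(s <- ss) (s %/ gcdn k s))%N.
Proof.
move=> k_prime; elim: ss => [|s ss IH] /= count_le; first by rewrite !big_nil gcdn1.
rewrite !big_cons; have [k_dvd|k_ndvd] := boolP (k %| s)%N; last first.
  have k_s_coprime : coprime k s by rewrite prime_coprime.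
  rewrite (Gauss_gcdr _ k_s_coprime) (eqP k_s_coprime) divn1 -muln_divA ?dvdn_gcdr // IH //.
  by rewrite (negbTE k_ndvd) in count_le.
have /eqP k_prod_coprime : coprime k (\prod_(s <- ss) s).
  rewrite prime_coprime // Euclid_dvd_prod // big_has has_count -leqNgt.
  by rewrite k_dvd /= in count_le; lia.
have /gcdn_idPl -> : (k %| s * \prod_(s <- ss) s)%N by rewrite dvdn_mulr.
rewrite (gcdn_idPl k_dvd) divn_mulAC // -IH; first by rewrite k_prod_coprime divn1.
by rewrite k_dvd in count_le; lia.
Qed.

Lemma div_gcdn_prime_eq1 k n : prime k -> (1 < n)%N -> (n %/ gcdn k n = 1)%N -> n = k.
Proof.
move=> k_prime n_gt1; rewrite div_gcdn_prime //; case: ifP => [k_dvd n_div|_ n1].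
  by rewrite -(divnK k_dvd) n_div mul1n.
by rewrite n1 in n_gt1.
Qed.

Lemma count_dvdn_prime_powers k (ss : seq nat) : prime k ->
  {in ss, forall s, prime_power s} -> uniq (map pdiv ss) -> (count (dvdn k) ss <= 1)%N.
Proof.
move=> k_prime ss_pp pdiv_uniq.
rewrite (eq_in_count (a2 := fun s => pdiv s == k)) => [|s /ss_pp]; last exact: dvdn_prime_power.
by rewrite -(count_map pdiv (pred1 k)) count_uniq_mem ?leq_b1.
Qed.

Lemma prod_gt1 (ss : seq nat) : ss != [::] -> {in ss, forall s, 1 < s}%N ->
  (1 < \prod_(s <- ss) s)%N.
Proof.
case: ss => // s ss _ ss_gt1; rewrite big_cons.
have s_gt1 := ss_gt1 s (mem_head _ _).
have prod_gt0 : (0 < \prod_(t <- ss) t)%N.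
  by rewrite big_seq prodn_cond_gt0 // => t ss_t; rewrite ltnW // ss_gt1 // inE ss_t orbT.
by rewrite (leq_trans s_gt1) // leq_pmulr.
Qed.

(** * Cyclotomic divisibility of mask polynomials *)

Definition mask_at (X : seq nat) (z : algC) : algC := \sum_(a <- X) z ^+ a.

Lemma horner_maskpoly X z : (map_poly intr (maskpoly X)).[z] = mask_at X z.
Proof.
rewrite rmorph_sum horner_sum; apply: eq_bigr => a _.
by rewrite rmorphXn /= map_polyX hornerXn.
Qed.

Lemma horner1_maskpoly X : (maskpoly X).[1] = (size X)%:R.
Proof.
rewrite horner_sum (eq_bigr (fun=> 1)) => [|a _]; last by rewrite hornerXn expr1n.
by rewrite big_const_seq count_predT iter_addr_0.
Qed.

Lemma mask_at1 X : mask_at X 1 = (size X)%:R.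
Proof.
rewrite /mask_at (eq_bigr (fun=> 1)) => [|a _]; last by rewrite expr1n.
by rewrite big_const_seq count_predT iter_addr_0.
Qed.

Lemma mask_at_scaleset k X z : mask_at (scaleset k X) z = mask_at X (z ^+ k).
Proof. by rewrite /mask_at big_map; apply: eq_bigr => a _; rewrite exprM. Qed.

Lemma eq_prim_root_order (R : nzRingType) m n (z : R) :
  m.-primitive_root z -> n.-primitive_root z -> m = n.
Proof.
move=> prim_m prim_n; apply/eqP; rewrite eqn_dvd.
by rewrite (prim_order_dvd prim_m) (prim_expr_order prim_n)
           (prim_order_dvd prim_n) (prim_expr_order prim_m) eqxx.
Qed.

Lemma root_Cyclotomic m n (z : algC) : (0 < m)%N -> n.-primitive_root z ->
  root (map_poly intr 'Phi_m) z = (m == n).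
Proof.
move=> m_gt0 prim_z; have [w prim_w] := C_prim_root_exists m_gt0.
rewrite (Cintr_Cyclotomic prim_w) (root_cyclotomic prim_w).
by apply/idP/eqP => [/eq_prim_root_order/(_ prim_z)|->].
Qed.

(* ['Phi_n] is the minimal polynomial over [rat] of every primitive [n]-th root of unity. *)
Lemma Cyclotomic_dvdp_root n (z : algC) (Q : {poly int}) :
  n.-primitive_root z -> ('Phi_n %| Q) = root (map_poly intr Q) z.
Proof.
move=> prim_z; have Phi_monic := Cyclotomic_monic n.
have Phi_unit : lead_coef 'Phi_n \is a GRing.unit by rewrite (monicP Phi_monic) unitr1.
have Phi_z : root (map_poly intr 'Phi_n) z.
  by rewrite (root_Cyclotomic _ prim_z) ?(prim_order_gt0 prim_z).
apply/idP/idP => [/(Pdiv.IdomainUnit.divpK Phi_unit) <-|Qz].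
  by rewrite rmorphM rootM Phi_z orbT.
set r := Q %% 'Phi_n.
have r_z : root (map_poly intr r) z.
  move: Qz; rewrite (Pdiv.IdomainUnit.divp_eq Phi_unit Q) -/r rmorphD rmorphM /=.
  by rewrite !rootE hornerD hornerM (rootP Phi_z) mulr0 add0r.
have [pm [Dpm _] pm_dvd] := minCpolyP z.
have pm_dvd_r : pm %| map_poly intr r.
  by rewrite -pm_dvd -map_poly_comp (eq_map_poly (fun x => rmorph_int _ x)).
have size_pm : size pm = size 'Phi_n.
  rewrite -(size_map_poly (ratr : {rmorphism rat -> algC})) -Dpm.
  rewrite (minCpoly_cyclotomic prim_z) -(Cintr_Cyclotomic prim_z).
  by rewrite size_map_inj_poly //; exact: intr_inj.
have size_r : (size r < size 'Phi_n)%N by rewrite ltn_modpN0 // monic_neq0.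
apply/eqP; apply: contraTeq size_r => r_neq0; rewrite -leqNgt -size_pm.
have size_r_rat : size (map_poly (intr : int -> rat) r) = size r.
  by apply: size_map_inj_poly => //; exact: intr_inj.
rewrite -size_r_rat dvdp_leq // -size_poly_eq0 size_r_rat size_poly_eq0.
exact: r_neq0.
Qed.

Lemma Cyclotomic_dvd_mask n (z : algC) X :
  n.-primitive_root z -> ('Phi_n %| maskpoly X) = (mask_at X z == 0).
Proof. by move=> prim_z; rewrite (Cyclotomic_dvdp_root _ prim_z) /root horner_maskpoly. Qed.

Lemma Cyclotomic_dvd_scaleset k n X : (0 < n)%N ->
  ('Phi_n %| maskpoly (scaleset k X)) = ('Phi_(n %/ gcdn k n) %| maskpoly X).
Proof.
move=> n_gt0; have [z prim_z] := C_prim_root_exists n_gt0.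
rewrite (Cyclotomic_dvd_mask _ prim_z) (Cyclotomic_dvd_mask _ (exp_prim_root prim_z k)).
by rewrite mask_at_scaleset.
Qed.

Lemma prod_Cyclotomic_dvdp (Q : {poly int}) (ns : seq nat) :
  uniq ns -> (forall n, n \in ns -> (0 < n)%N) ->
  (forall n, n \in ns -> 'Phi_n %| Q) ->
  exists R, Q = R * \prod_(n <- ns) 'Phi_n.
Proof.
elim: ns => [|n ns IH] /=; first by exists Q; rewrite big_nil mulr1.
move=> /andP[n_ns ns_uniq] ns_gt0 ns_dvd.
have [R eQ] : exists R, Q = R * \prod_(m <- ns) 'Phi_m.
  by apply: IH => // m m_ns; [apply: ns_gt0 | apply: ns_dvd]; rewrite inE m_ns orbT.
have [z prim_z] := C_prim_root_exists (ns_gt0 n (mem_head _ _)).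
have prod_z : root (map_poly intr (\prod_(m <- ns) 'Phi_m)) z = false.
  rewrite rmorph_prod rootE horner_prod prodf_seq_eq0; apply/hasPn => m m_ns /=.
  rewrite -rootE (root_Cyclotomic _ prim_z); last by apply: ns_gt0; rewrite inE m_ns orbT.
  by apply: contraNN n_ns => /eqP <-.
rewrite eQ; have := ns_dvd n (mem_head _ _).
rewrite eQ (Cyclotomic_dvdp_root _ prim_z) rmorphM rootM prod_z orbF.
rewrite -(Cyclotomic_dvdp_root _ prim_z) => /(Pdiv.IdomainUnit.divpK _) <-.
  by exists (R %/ 'Phi_n); rewrite big_cons mulrA.
by rewrite (monicP (Cyclotomic_monic n)) unitr1.
Qed.

Lemma Cyclotomic_pfactor p j : prime p -> (0 < j)%N ->
  'Phi_(p ^ j) = \sum_(i < p) 'X^(p ^ j.-1) ^+ i.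
Proof.
move=> p_prime j_gt0; set m := (p ^ j.-1)%N.
have pj_eq : (p ^ j = m * p)%N by rewrite -expnSr prednK.
have m_gt0 : (0 < m)%N by rewrite expn_gt0 prime_gt0.
have pj_gt0 : (0 < p ^ j)%N by rewrite expn_gt0 prime_gt0.
have m_dvd : (m %| p ^ j)%N by rewrite pj_eq dvdn_mulr.
have divisors_pj : perm_eq (divisors (p ^ j)) (p ^ j :: divisors m)%N.
  apply: uniq_perm; rewrite /= ?divisors_uniq ?andbT //.
    rewrite -dvdn_divisors //; apply/negP => /(dvdn_leq m_gt0).
    by rewrite pj_eq; have := prime_gt1 p_prime; nia.
  move=> d; rewrite inE -!dvdn_divisors //; apply/idP/orP => [|[/eqP->//|]].
    case/dvdn_pfactor => // i i_le_j ->; have [->|i_neq_j] := eqVneq i j; first by left.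
    by right; rewrite dvdn_exp2l //; lia.
  by move/dvdn_trans; apply.
have Xm1_neq0 : 'X^m - 1 != 0 :> {poly int}.
  by rewrite -size_poly_eq0 -polyC1 size_XnsubC.
apply: (mulIf Xm1_neq0); rewrite [RHS]mulrC -subrX1 -exprM -pj_eq.
by rewrite -(prod_Cyclotomic pj_gt0) (perm_big _ divisors_pj) big_cons prod_Cyclotomic.
Qed.

Lemma horner1_Cyclotomic_pfactor p j : prime p -> (0 < j)%N ->
  ('Phi_(p ^ j)).[1] = p%:R.
Proof.
move=> p_prime j_gt0; rewrite Cyclotomic_pfactor // horner_sum.
under eq_bigr => i _ do rewrite -exprM hornerXn expr1n.
by rewrite sumr_const card_ord.
Qed.

Lemma count_Cyclotomic_pfactor_dvd_size (X : seq nat) p N : prime p ->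
  (p ^ count (fun j => 'Phi_(p ^ j) %| maskpoly X)%R (iota 1 N) %| size X)%N.
Proof.
move=> p_prime; rewrite -size_filter; set J := filter _ (iota 1 N).
have [R eX] : exists R, maskpoly X = R * \prod_(n <- [seq p ^ j | j <- J]%N) 'Phi_n.
  apply: prod_Cyclotomic_dvdp.
  - by rewrite map_inj_uniq ?filter_uniq ?iota_uniq //; exact: expnI (prime_gt1 p_prime).
  - by move=> n /mapP[j _ ->]; rewrite expn_gt0 prime_gt0.
  - by move=> n /mapP[j]; rewrite mem_filter => /andP[? _] ->.
have := congr1 (horner^~ 1) eX; rewrite /= horner1_maskpoly hornerM horner_prod big_map.
rewrite big_seq (eq_bigr (fun=> p%:R)) => [|j]; last first.
  by rewrite mem_filter mem_iota => /and3P[_ j_gt0 _]; rewrite horner1_Cyclotomic_pfactor.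
rewrite -big_seq big_const_seq count_predT iter_mulr_1 -natrX => eX1.
suff : ((p ^ size J)%N%:Z %| (size X)%:Z)%Z by rewrite dvdzE.
by apply/dvdzP; exists R.[1]; rewrite -!natz.
Qed.

Lemma sum_expr_eq0 (R : idomainType) (z : R) n : z ^+ n = 1 -> z != 1 ->
  \sum_(r < n) z ^+ r = 0.
Proof.
move=> zn z_neq1; have := subrX1 z n; rewrite zn subrr => /esym/eqP.
by rewrite mulf_eq0 subr_eq0 (negbTE z_neq1) => /eqP.
Qed.

Lemma maskpoly_mod_partition (X : seq nat) k : (0 < k)%N ->
  maskpoly X = \sum_(i < k) maskpoly [seq a <- X | a %% k == i]%N.
Proof.
move=> k_gt0; under [RHS]eq_bigr do rewrite /maskpoly big_filter.
rewrite [RHS](exchange_big_dep xpredT) //=; apply: eq_bigr => a _.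
by rewrite (big_pred1 (Ordinal (ltn_pmod a k_gt0))) // => i; rewrite -val_eqE eq_sym.
Qed.

Lemma comp_maskpoly_Xn X k : maskpoly X \Po 'X^k = maskpoly (scaleset k X).
Proof.
rewrite /maskpoly big_map raddf_sum; apply: eq_bigr => a _.
by rewrite /= comp_Xn_poly -exprM mulnC.
Qed.

Lemma Cyclotomic1_dvd_mask X : ('Phi_1 %| maskpoly X) = (size X == 0)%N.
Proof.
have [z prim_z] := C_prim_root_exists (ltn0Sn 0).
have z1 : z = 1 by rewrite -(prim_expr_order prim_z) expr1.
by rewrite (Cyclotomic_dvd_mask _ prim_z) z1 mask_at1 pnatr_eq0.
Qed.

Lemma SX_scaleset_prime k X s : prime k -> prime_power s -> s != k ->
  SX (scaleset k X) s <-> SX X (s %/ gcdn k s).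
Proof.
move=> k_prime s_pp s_neq_k; have [t_pp _] := prime_power_div_gcdn k_prime s_pp s_neq_k.
by rewrite /SX Cyclotomic_dvd_scaleset; [tauto | exact: ltnW (prime_power_gt1 s_pp)].
Qed.

(** * Tilings of the integers and Newman's periodicity theorem *)

Definition periodic (D : int -> Prop) (P : nat) := forall t : int, D (t + P%:Z) <-> D t.

Lemma periodicMz D P : periodic D P -> forall t q : int, D (t + q * P%:Z) <-> D t.
Proof.
move=> perD; have perDn (n : nat) t : D (t + n%:Z * P%:Z) <-> D t.
  elim: n t => [|n IH] t; first by rewrite mul0r addr0.
  by rewrite -addn1 PoszD mulrDl mul1r addrA perD IH.
move=> t [] n; first exact: perDn.
by rewrite -(perDn n.+1) NegzE mulNr subrK.
Qed.

Lemma window_repeats (D : int -> Prop) L : exists a c : nat, (a < c)%N /\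
  forall j : nat, (j < L)%N -> D (a%:Z + j%:Z) <-> D (c%:Z + j%:Z).
Proof.
pose g (i : 'I_(2 ^ L)%N.+1) : {ffun 'I_L -> bool} :=
  [ffun j : 'I_L => `[< D (i%:Z + (j : nat)%:Z) >]].
have g_not_inj : ~~ injectiveb g.
  by apply/injectiveP => /leq_card; rewrite card_ffun card_bool !card_ord ltnn.
have /injectivePn[x [y x_neq_y gxy]] := g_not_inj.
have agree (j : nat) : (j < L)%N -> D (x%:Z + j%:Z) <-> D (y%:Z + j%:Z).
  move=> jL; apply: asbool_eq_equiv.
  by have := congr1 (fun F : {ffun 'I_L -> bool} => F (Ordinal jL)) gxy; rewrite !ffunE.
case: (ltngtP x y) => [xy|yx|/val_inj xy]; last by rewrite xy eqxx in x_neq_y.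
  by exists x, y.
by exists y, x; split => // j /agree; case.
Qed.

Lemma tilesI (B : seq nat) (D : int -> Prop) :
  (forall z, exists b d, [/\ b \in B, D d & z = b%:Z + d]) ->
  (forall b1 d1 b2 d2, b1 \in B -> D d1 -> b2 \in B -> D d2 ->
     b1%:Z + d1 = b2%:Z + d2 -> b1 = b2 /\ d1 = d2) ->
  tiles B D.
Proof.
move=> cover uniq_rep z; have [b [d [Bb Dd z_eq]]] := cover z.
exists (b, d); split=> // -[b' d'] /= [Bb' [Dd' z_eq']].
by have [-> ->] := uniq_rep _ _ _ _ Bb Dd Bb' Dd' (etrans (esym z_eq) z_eq').
Qed.

Section Tiling.
Variables (B : seq nat) (D : int -> Prop).
Hypothesis tBD : tiles B D.

Lemma tiles_cover z : exists b d, [/\ b \in B, D d & z = b%:Z + d].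
Proof. by have [[b d] [[Bb [Dd ->]] _]] := tBD z; exists b, d. Qed.

Lemma tiles_unique b1 d1 b2 d2 : b1 \in B -> D d1 -> b2 \in B -> D d2 ->
  b1%:Z + d1 = b2%:Z + d2 -> b1 = b2 /\ d1 = d2.
Proof.
move=> Bb1 Dd1 Bb2 Dd2 e; have [p [_ uniq_rep]] := tBD (b1%:Z + d1).
have p_eq1 := uniq_rep (b1, d1) (conj Bb1 (conj Dd1 erefl)).
by case: (etrans (esym p_eq1) (uniq_rep (b2, d2) (conj Bb2 (conj Dd2 e)))).
Qed.

Lemma tiles_neq_nil : B != [::].
Proof. by have [b [d [Bb _ _]]] := tiles_cover 0; apply: contraTneq Bb => ->. Qed.

Lemma tiles_memE b0 z : b0 \in B ->
  D (z - b0%:Z) <-> ~ exists2 b, b \in B & b != b0 /\ D (z - b%:Z).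
Proof.
move=> Bb0; split=> [Dz0 [b Bb [b_neq_b0 Dzb]]|no_other].
  have := tiles_unique Bb0 Dz0 Bb Dzb; rewrite !subrKC => /(_ erefl) [b0_eq_b _].
  by rewrite b0_eq_b eqxx in b_neq_b0.
have [b [d [Bb Dd z_eq]]] := tiles_cover z; subst z.
have [<-|b_neq_b0] := eqVneq b b0; first by rewrite addrC addKr.
by exfalso; apply: no_other; exists b; rewrite // addrC addKr.
Qed.

(* Each point [z] lies in exactly one translate [b + D], so whether [z - b0] lies in [D] is
   decided by the other translates. *)
Lemma tiles_determined b0 z z' : b0 \in B ->
  (forall b, b \in B -> b != b0 -> D (z - b%:Z) <-> D (z' - b%:Z)) ->
  D (z - b0%:Z) <-> D (z' - b0%:Z).
Proof.
move=> Bb0 same; rewrite !tiles_memE //.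
by split=> no_other [b Bb [nb Db]]; apply: no_other; exists b => //; split => //; apply/same.
Qed.

(* By pigeonhole two windows of length [max B - min B] agree; [tiles_determined] then
   propagates the agreement forward (using [min B]) and backward (using [max B]). *)
Theorem tiles_periodic : exists2 P, (0 < P)%N & periodic D P.
Proof.
have B_neq_nil := tiles_neq_nil.
have [Bm le_m] := seqminP B_neq_nil; set m := seqmin B in Bm le_m.
have BL := bigmax_seq_mem B_neq_nil; set L := (\max_(b <- B) b)%N in BL.
have le_L b : b \in B -> (b <= L)%N by move=> Bb; exact: leq_bigmax_seq.
have [a [c [a_lt_c base]]] := window_repeats D (L - m).
pose agree (t : int) := D (a%:Z + t) <-> D (c%:Z + t).
have forward (u : nat) : agree u%:Z.
  elim/ltn_ind: u => u IH; have [/base//|u_ge] := ltnP u (L - m).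
  have := @tiles_determined m (a%:Z + u%:Z + m%:Z) (c%:Z + u%:Z + m%:Z) Bm.
  rewrite !addrK; apply => b Bb b_neq_m.
  have [le_mb le_bL] := (le_m b Bb, le_L b Bb).
  have shift e : e%:Z + u%:Z + m%:Z - b%:Z = e%:Z + (u + m - b)%N%:Z by lia.
  by rewrite !shift; apply: IH; lia.
have backward (u : nat) t : - u%:Z <= t -> agree t.
  elim: u t => [|u IH] t t_ge.
    by have -> : t = `|t|%N by lia.
  have [/IH//|t_lt] := lerP (- u%:Z) t.
  have := @tiles_determined L (a%:Z + t + L%:Z) (c%:Z + t + L%:Z) BL.
  rewrite !addrK; apply => b Bb b_neq_L; have le_bL := le_L b Bb.
  have shift e : e%:Z + t + L%:Z - b%:Z = e%:Z + (t + (L - b)%N%:Z) by lia.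
  by rewrite !shift; apply: IH; lia.
exists (c - a)%N; first by rewrite subn_gt0.
move=> t; have t_ge : - `|t - a%:Z|%N%:Z <= t - a%:Z by lia.
have := backward _ _ t_ge; rewrite /agree subrKC.
have -> : c%:Z + (t - a%:Z) = t + (c - a)%N%:Z by lia.
exact: iff_sym.
Qed.
End Tiling.

(** * Tilings with a periodic complement *)

(* For [D] of period [P], [window D P] is a fundamental domain, and [B (+) D = Z] becomes a
   tiling of [Z/PZ] by [B] and [window D P]. *)
Definition window (D : int -> Prop) (P : nat) : seq nat :=
  [seq d <- iota 0 P | `[< D d%:Z >]].

Lemma mem_window D P d : (d \in window D P) = (d < P)%N && `[< D d%:Z >].
Proof. by rewrite mem_filter mem_iota andbC. Qed.

Lemma window_uniq D P : uniq (window D P).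
Proof. by rewrite filter_uniq ?iota_uniq. Qed.

Section PeriodicTiling.
Variables (B : seq nat) (D : int -> Prop) (P : nat).
Hypotheses (B_uniq : uniq B) (tBD : tiles B D) (P_gt0 : (0 < P)%N) (perD : periodic D P).
Local Notation W := (window D P).

Lemma tiles_mod_inj b1 d1 b2 d2 : b1 \in B -> d1 \in W -> b2 \in B -> d2 \in W ->
  (b1 + d1 = b2 + d2 %[mod P])%N -> b1 = b2 /\ d1 = d2.
Proof.
rewrite !mem_window => Bb1 /andP[d1_lt /asboolP Dd1] Bb2 /andP[d2_lt /asboolP Dd2] eq_mod.
set q : int := ((b1 + d1) %/ P)%N%:Z - ((b2 + d2) %/ P)%N%:Z.
have eq_int : b1%:Z + d1%:Z = b2%:Z + (d2%:Z + q * P%:Z).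
  by have := divn_eq (b1 + d1) P; have := divn_eq (b2 + d2) P; rewrite eq_mod; lia.
have [<- d_eq] := tiles_unique tBD Bb1 Dd1 Bb2 ((periodicMz perD _ _).2 Dd2) eq_int.
have q0 : q = 0 by nia.
by split=> //; move: d_eq; rewrite q0 mul0r addr0 => -[].
Qed.

Lemma tiles_mod_cover r : (r < P)%N ->
  exists b d, [/\ b \in B, d \in W & r = (b + d) %% P]%N.
Proof.
move=> r_lt; have [b [c [Bb Dc r_eq]]] := tiles_cover tBD r%:Z.
set d := (c %% P%:Z)%Z; set q := (c %/ P%:Z)%Z.
have c_eq : c = q * P%:Z + d := divz_eq c P%:Z.
have d_ge0 : 0 <= d by apply: modz_ge0; rewrite eqz_nat -lt0n.
have d_lt : d < P%:Z by apply: ltz_pmod; rewrite ltz_nat.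
exists b, `|d|%N; split => //.
  rewrite mem_window; apply/andP; split; first by lia.
  by apply/asboolP; rewrite gez0_abs //; apply/(periodicMz perD _ q); rewrite addrC -c_eq.
apply/eqP; rewrite -eqz_nat -modz_nat.
have -> : (b + `|d|)%N%:Z = - q * P%:Z + r%:Z by lia.
by rewrite modzMDl modz_nat modn_small.
Qed.

Lemma perm_tiles_mod : perm_eq [seq (b + d) %% P | b <- B, d <- W]%N (iota 0 P).
Proof.
apply: uniq_perm; rewrite ?iota_uniq //.
  apply: allpairs_uniq => //; first exact: window_uniq.
  move=> [b1 d1] [b2 d2] /allpairsP[[x1 y1] [/= Bb1 Wd1 [-> ->]]].
  move=> /allpairsP[[x2 y2] [/= Bb2 Wd2 [-> ->]]] /=.
  by move=> /(tiles_mod_inj Bb1 Wd1 Bb2 Wd2) [-> ->].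
move=> r; rewrite mem_iota add0n /=; apply/allpairsP/idP => [[[b d] [_ _ ->]]|r_lt].
  by rewrite ltn_pmod.
by have [b [d [Bb Wd ->]]] := tiles_mod_cover r_lt; exists (b, d).
Qed.

Lemma size_tiles_window : (size B * size W)%N = P.
Proof.
rewrite -(size_allpairs (fun b d => (b + d) %% P)%N) (perm_size perm_tiles_mod).
exact: size_iota.
Qed.

Lemma mask_at_tiles_window (z : algC) : z ^+ P = 1 ->
  mask_at B z * mask_at W z = \sum_(r < P) z ^+ r.
Proof.
move=> zP; rewrite big_distrlr /= -(big_mkord xpredT (fun r => z ^+ r)).
rewrite /index_iota subn0 -(perm_big _ perm_tiles_mod) big_allpairs_dep /=.
apply: eq_bigr => b _; apply: eq_bigr => d _.
by rewrite -exprD expr_mod.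
Qed.

Lemma Cyclotomic_dvd_tiles_window p j : prime p -> (0 < j)%N -> (p ^ j %| P)%N ->
  ('Phi_(p ^ j) %| maskpoly B) || ('Phi_(p ^ j) %| maskpoly W).
Proof.
move=> p_prime j_gt0 pj_dvd.
have pj_gt1 : (1 < p ^ j)%N by rewrite -(expn0 p) ltn_exp2l ?prime_gt1.
have [z prim_z] := C_prim_root_exists (ltnW pj_gt1).
have zP : z ^+ P = 1 by apply/eqP; rewrite -(prim_order_dvd prim_z).
have z_neq1 : z != 1.
  by apply: contraTneq pj_gt1 => z1; rewrite ltnNge dvdn_leq // (prim_order_dvd prim_z) z1 expr1n.
rewrite !(Cyclotomic_dvd_mask _ prim_z) -mulf_eq0 mask_at_tiles_window //.
by rewrite sum_expr_eq0.
Qed.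

(* Coven-Meyerowitz: for [p ^ j %| P], [B(z) W(z) = 0] at primitive [p ^ j]-th roots, so
   ['Phi_(p ^ j)] divides [B] or [W]; as ['Phi_(p ^ j)(1) = p], the [p]-adic valuation of
   [|B| |W| = P] leaves room for no other [j]. *)
Lemma SX_tiles_window s : prime_power s -> SX B s <-> (s %| P)%N /\ ~ SX W s.
Proof.
move=> s_pp; have [p [t [p_prime [t_gt0 s_eq]]]] := s_pp; subst s.
have [B_gt0 W_gt0] : (0 < size B)%N /\ (0 < size W)%N.
  by apply/andP; rewrite -muln_gt0 size_tiles_window.
set e := logn p P.
have cover : {in iota 1 e, forall j,
    ('Phi_(p ^ j) %| maskpoly B) || ('Phi_(p ^ j) %| maskpoly W)}.
  move=> j; rewrite mem_iota => /andP[j_gt0 j_le].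
  by apply: Cyclotomic_dvd_tiles_window; rewrite // pfactor_dvdn //; lia.
have count_le : (count (fun j => 'Phi_(p ^ j) %| maskpoly B)%R (iota 1 (e + t))
    + count (fun j => 'Phi_(p ^ j) %| maskpoly W)%R (iota 1 (e + t)) <= e)%N.
  have -> : e = (logn p (size B) + logn p (size W))%N by rewrite -lognM // size_tiles_window.
  by apply: leq_add; rewrite -pfactor_dvdn //; exact: count_Cyclotomic_pfactor_dvd_size.
have t_mem : t \in iota 1 (e + t) by rewrite mem_iota; lia.
have := count_iota_partition (leq_addr t e) cover count_le t_mem.
rewrite /SX => ->; rewrite pfactor_dvdn // -/e.
split=> [[_ /andP[t_le W_ndvd]]|[t_le W_nSX]].
  by split=> // -[_ W_dvd]; rewrite W_dvd in W_ndvd.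
by split=> //; rewrite t_le /=; apply/negP => W_dvd; apply: W_nSX.
Qed.

End PeriodicTiling.

(** * Residue classes modulo k *)

Lemma Abar_uniq A k i : uniq (Abar A k i).
Proof. exact: undup_uniq. Qed.

Section ResidueClasses.
Variables (A : seq nat) (C : int -> Prop) (k : nat).
Hypotheses (A_uniq : uniq A) (k_gt0 : (0 < k)%N).
Hypotheses (C_dvd : forall c, C c -> (k%:Z %| c)%Z) (tAC : tiles A C).

Lemma mem_Ares i a : (a \in Ares A k i) = (a \in A) && (a %% k == i)%N.
Proof. by rewrite mem_filter andbC. Qed.

Lemma modz_tiles a c x : C c -> x = a%:Z + c -> (x %% k%:Z)%Z = (a %% k)%N%:Z.
Proof. by move=> /C_dvd /dvdzP[q ->] ->; rewrite addrC modzMDl modz_nat. Qed.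

Lemma Ares_neq_nil i : (i < k)%N -> Ares A k i != [::].
Proof.
move=> lt_ik; have [a [c [Aa Cc i_eq]]] := tiles_cover tAC i%:Z.
have := modz_tiles Cc i_eq; rewrite modz_nat modn_small // => -[a_mod].
by apply/eqP => Ares_nil; have := mem_Ares i a; rewrite Ares_nil Aa a_mod eqxx.
Qed.

Lemma amin_Ares i : (i < k)%N ->
  amin A k i \in Ares A k i /\ {in Ares A k i, forall a, (amin A k i <= a)%N}.
Proof. by move=> /Ares_neq_nil; exact: seqminP. Qed.

Lemma Ares_amin i a : (i < k)%N -> a \in Ares A k i ->
  a = (amin A k i + k * ((a - amin A k i) %/ k))%N.
Proof.
move=> lt_ik Ares_a; have [Ares_min le_min] := amin_Ares lt_ik.
have a_ge := le_min a Ares_a; move: Ares_a Ares_min; rewrite !mem_Ares.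
move=> /andP[_ /eqP a_mod] /andP[_ /eqP min_mod].
have : (k %| a - amin A k i)%N by rewrite -eqn_mod_dvd // a_mod min_mod.
by move=> /divnK; rewrite mulnC; lia.
Qed.

Lemma Abar_map i : (i < k)%N ->
  Abar A k i = [seq (a - amin A k i) %/ k | a <- Ares A k i]%N.
Proof.
move=> lt_ik; rewrite /Abar undup_id // map_inj_in_uniq ?filter_uniq // => a b Aa Ab eq_ab.
by rewrite (Ares_amin lt_ik Aa) (Ares_amin lt_ik Ab) eq_ab.
Qed.

Lemma mem_Abar i b : (i < k)%N -> (b \in Abar A k i) = (amin A k i + k * b \in A)%N.
Proof.
move=> lt_ik; have [Ares_min _] := amin_Ares lt_ik; rewrite Abar_map //.
apply/mapP/idP => [[a Ares_a ->]|A_b].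
  by rewrite -Ares_amin //; move: Ares_a; rewrite mem_Ares => /andP[].
exists (amin A k i + k * b)%N; last by rewrite addKn mulKn.
move: Ares_min; rewrite !mem_Ares A_b => /andP[_ /eqP m_mod].
by rewrite addnC mulnC modnMDl m_mod eqxx.
Qed.

Lemma maskpoly_Ares i : (i < k)%N ->
  maskpoly (Ares A k i) = 'X^(amin A k i) * maskpoly (scaleset k (Abar A k i)).
Proof.
move=> lt_ik; rewrite Abar_map // /maskpoly /scaleset -map_comp big_map big_distrr /=.
by apply: eq_big_seq => a Ares_a; rewrite -exprD -Ares_amin.
Qed.

Lemma maskpoly_decomp :
  maskpoly A = \sum_(i < k) 'X^(amin A k i) * (maskpoly (Abar A k i) \Po 'X^k).
Proof.
rewrite (maskpoly_mod_partition _ k_gt0); apply: eq_bigr => i _.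
by rewrite comp_maskpoly_Xn -maskpoly_Ares.
Qed.

Lemma mask_at_decomp z :
  mask_at A z = \sum_(i < k) z ^+ amin A k i * mask_at (Abar A k i) (z ^+ k).
Proof.
rewrite -horner_maskpoly maskpoly_decomp rmorph_sum horner_sum; apply: eq_bigr => i _.
rewrite comp_maskpoly_Xn rmorphM hornerM horner_maskpoly mask_at_scaleset.
by rewrite rmorphXn /= map_polyX hornerXn.
Qed.

Lemma tiles_Abar i : (i < k)%N -> tiles (Abar A k i) (Cdiv C k).
Proof.
move=> lt_ik; have [Ares_min _] := amin_Ares lt_ik; set m := amin A k i in Ares_min *.
have k_neq0 : k%:Z != 0 by rewrite eqz_nat -lt0n.
apply: tilesI => [z|b1 d1 b2 d2].
  have [a [c [Aa Cc z_eq]]] := tiles_cover tAC (m%:Z + k%:Z * z).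
  have := Ares_min; rewrite mem_Ares => /andP[_ /eqP m_mod].
  have Ares_a : a \in Ares A k i.
    rewrite mem_Ares Aa /=; apply/eqP/eqP; rewrite -eqz_nat -(modz_tiles Cc z_eq).
    by rewrite addrC mulrC modzMDl modz_nat m_mod.
  have [q c_eq] := dvdzP (C_dvd Cc).
  set b := ((a - m) %/ k)%N; exists b, q; split.
  - by rewrite mem_Abar // -Ares_amin //; move: Ares_a; rewrite mem_Ares => /andP[].
  - by rewrite /Cdiv mulrC -c_eq.
  - apply: (mulfI k_neq0); move: z_eq; rewrite c_eq {1}(Ares_amin lt_ik Ares_a) -/b; lia.
rewrite !mem_Abar // => Ab1 Cd1 Ab2 Cd2 eq_sum.
have eq_rep : (m + k * b1)%N%:Z + k%:Z * d1 = (m + k * b2)%N%:Z + k%:Z * d2.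
  by rewrite !PoszD !PoszM -!addrA -!mulrDr eq_sum.
have [/eqP eq_b /(mulfI k_neq0) eq_d] := tiles_unique tAC Ab1 Cd1 Ab2 Cd2 eq_rep.
by move: eq_b; rewrite eqn_add2l eqn_mul2l eqn0Ngt k_gt0 => /eqP.
Qed.

Section Period.
Variable P : nat.
Hypotheses (P_gt0 : (0 < P)%N) (perCk : periodic (Cdiv C k) P).
Local Notation W := (window (Cdiv C k) P).

Let kP_gt0 : (0 < k * P)%N.
Proof. by rewrite muln_gt0 k_gt0. Qed.

Lemma periodic_C : periodic C (k * P).
Proof.
move=> t; have [/dvdzP[q ->]|k_ndvd] := boolP (k%:Z %| t)%Z.
  by rewrite PoszM mulrC -mulrDr; exact: perCk q.
split=> /C_dvd; last by rewrite (negbTE k_ndvd).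
by rewrite rpredDr ?(negbTE k_ndvd) // PoszM dvdz_mulr.
Qed.

Lemma window_C : window C (k * P) = scaleset k W.
Proof.
apply: (irr_sorted_eq ltn_trans ltnn).
- by apply: sorted_filter; [exact: ltn_trans | exact: iota_ltn_sorted].
- apply: (homo_sorted (e := ltn)) => [x y|]; first by rewrite /= ltn_pmul2l.
  by apply: sorted_filter; [exact: ltn_trans | exact: iota_ltn_sorted].
move=> d; rewrite mem_window; apply/andP/mapP => [[d_lt /asboolP Cd]|[e We ->]].
  have /dvdzP[q d_eq] := C_dvd Cd; have q_ge0 : 0 <= q by nia.
  exists `|q|%N; last by lia.
  rewrite mem_window; apply/andP; split; first by nia.
  by apply/asboolP; rewrite /Cdiv gez0_abs // mulrC -d_eq.
move: We; rewrite mem_window => /andP[e_lt /asboolP Ce].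
by rewrite ltn_pmul2l //; split=> //; apply/asboolP; rewrite PoszM.
Qed.

Lemma size_Abar_window i : (i < k)%N -> (size (Abar A k i) * size W)%N = P.
Proof. by move=> lt_ik; apply: size_tiles_window (Abar_uniq _ _ _) (tiles_Abar lt_ik) _ _. Qed.

Lemma SX_Abar i s : (i < k)%N -> prime_power s ->
  SX (Abar A k i) s <-> (s %| P)%N /\ ~ SX W s.
Proof. by move=> lt_ik; exact: SX_tiles_window (Abar_uniq _ _ _) (tiles_Abar lt_ik) _ _ s. Qed.

Lemma size_A_window : (size A * size W)%N = (k * P)%N.
Proof.
by have := size_tiles_window A_uniq tAC kP_gt0 periodic_C; rewrite window_C size_map.
Qed.

Lemma SX_A s : prime_power s -> SX A s <-> (s %| k * P)%N /\ ~ SX (scaleset k W) s.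
Proof.
by rewrite -window_C; exact: SX_tiles_window A_uniq tAC kP_gt0 periodic_C s.
Qed.

Lemma size_window_gt0 : (0 < size W)%N.
Proof.
have := P_gt0; rewrite -[X in (0 < X)%N -> _](size_Abar_window k_gt0) muln_gt0.
by case/andP.
Qed.

Lemma size_Abar i : (i < k)%N -> (size (Abar A k i) * k)%N = size A.
Proof.
move=> lt_ik; apply/eqP; rewrite -(eqn_pmul2r size_window_gt0) size_A_window.
by rewrite mulnAC size_Abar_window // mulnC.
Qed.

Lemma SX_Abar_eq i j s : (i < k)%N -> (j < k)%N ->
  SX (Abar A k i) s <-> SX (Abar A k j) s.
Proof.
move=> lt_ik lt_jk; split=> SX_s; have s_pp := SX_s.1.
  by apply/(SX_Abar lt_jk s_pp)/(SX_Abar lt_ik s_pp).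
by apply/(SX_Abar lt_ik s_pp)/(SX_Abar lt_jk s_pp).
Qed.

Section PrimeModulus.
Hypothesis k_prime : prime k.

Lemma SX_A_k : SX A k.
Proof.
have k_pp : prime_power k by exists k, 1%N; rewrite expn1.
apply/(SX_A k_pp); split; first exact: dvdn_mulr.
case=> _; rewrite Cyclotomic_dvd_scaleset ?prime_gt0 // gcdnn divnn prime_gt0 //.
by rewrite Cyclotomic1_dvd_mask; apply/negP; rewrite -lt0n size_window_gt0.
Qed.

Lemma SX_A_Abar0 s : prime_power s -> s != k ->
  SX A s <-> SX (Abar A k 0) (s %/ gcdn k s).
Proof.
move=> s_pp s_neq_k; have [t_pp _] := prime_power_div_gcdn k_prime s_pp s_neq_k.
rewrite (SX_A s_pp) (SX_Abar k_gt0 t_pp) dvdn_div_gcdn_prime //.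
by rewrite (SX_scaleset_prime _ k_prime s_pp s_neq_k).
Qed.

Lemma SX_A_scaleset s : SX A s <-> s = k \/ SX (scaleset k (Abar A k 0)) s.
Proof.
have [->|s_neq_k] := eqVneq s k; first by split=> _; [left | exact: SX_A_k].
split=> [SX_s|[/eqP|SX_s]]; [right | by rewrite (negbTE s_neq_k) |]; have s_pp := SX_s.1.
  exact/(SX_scaleset_prime _ k_prime s_pp s_neq_k)/(SX_A_Abar0 s_pp s_neq_k).
exact/(SX_A_Abar0 s_pp s_neq_k)/(SX_scaleset_prime _ k_prime s_pp s_neq_k).
Qed.

Lemma mask_at_A_eq0 (ss : seq nat) z : (forall i, (i < k)%N -> T2 (Abar A k i)) ->
  ss != [::] -> (\prod_(t <- ss) t).-primitive_root (z ^+ k) ->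
  {in ss, forall t, SX (Abar A k 0) t} -> uniq (map pdiv ss) -> mask_at A z = 0.
Proof.
move=> T2_Abar ss_neq prim_zk SX_ss pdiv_uniq; rewrite mask_at_decomp big1 // => i _.
have : 'Phi_(\prod_(t <- ss) t) %| maskpoly (Abar A k i).
  apply: T2_Abar (ltn_ord i) _ ss_neq _ pdiv_uniq => t /SX_ss.
  by move/(SX_Abar_eq _ k_gt0 (ltn_ord i)).
by rewrite (Cyclotomic_dvd_mask _ prim_zk) => /eqP ->; rewrite mulr0.
Qed.

Lemma T2_A : (forall i, (i < k)%N -> T2 (Abar A k i)) -> T2 A.
Proof.
move=> T2_Abar ss ss_neq SX_ss pdiv_uniq.
have pp_ss : {in ss, forall s, prime_power s} by move=> s /SX_ss[].
set n := (\prod_(s <- ss) s)%N.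
have n_gt1 : (1 < n)%N by apply: prod_gt1 => // s /pp_ss/prime_power_gt1.
have [z prim_z] := C_prim_root_exists (ltnW n_gt1).
rewrite (Cyclotomic_dvd_mask _ prim_z).
set ss' := [seq s %/ gcdn k s | s <- ss & s != k]%N.
have n'_eq : (n %/ gcdn k n)%N = (\prod_(t <- ss') t)%N.
  rewrite prod_div_gcdn_prime ?count_dvdn_prime_powers // big_map big_filter [RHS]big_mkcond.
  by apply: eq_bigr => s _; case: eqP => [->|//]; rewrite gcdnn divnn prime_gt0.
have [ss'_nil|ss'_neq] := eqVneq ss' [::].
  rewrite ss'_nil big_nil in n'_eq; have [_] := SX_A_k.
  by rewrite -(div_gcdn_prime_eq1 k_prime n_gt1 n'_eq) (Cyclotomic_dvd_mask _ prim_z).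
apply/eqP; apply: (mask_at_A_eq0 T2_Abar ss'_neq).
- by rewrite -n'_eq; exact: exp_prim_root.
- move=> t /mapP[s]; rewrite mem_filter => /andP[s_neq_k ss_s] ->.
  exact/(SX_A_Abar0 (pp_ss s ss_s) s_neq_k)/SX_ss.
have -> : map pdiv ss' = map pdiv [seq s <- ss | s != k].
  rewrite -map_comp; apply/eq_in_map => s; rewrite mem_filter => /andP[s_neq_k /pp_ss s_pp].
  by have [_] := prime_power_div_gcdn k_prime s_pp s_neq_k.
exact: subseq_uniq (map_subseq _ (filter_subseq _ _)) pdiv_uniq.
Qed.

End PrimeModulus.
End Period.

End ResidueClasses.

Unset Implicit Arguments. Set Strict Implicit.

Theorem lemma2p5 (A : seq nat) (C : int -> Prop) (k : nat) :
  uniq A -> (1 < k)%N ->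
  (forall c, C c -> (k%:Z %| c)%Z) ->
  tiles A C ->
  (* (1) *)
  maskpoly A = \sum_(i < k) 'X^(amin A k i) * (maskpoly (Abar A k i) \Po 'X^k)
  (* (2) *)
  /\ (forall i, (i < k)%N -> tiles (Abar A k i) (Cdiv C k))
  (* (3) *)
  /\ (forall i, (i < k)%N -> (size (Abar A k i) * k)%N = size A)
  (* (4) *)
  /\ (forall i j, (i < k)%N -> (j < k)%N ->
        forall s, SX (Abar A k i) s <-> SX (Abar A k j) s)
  (* (5) *)
  /\ (prime k ->
        (forall s, SX A s <-> (s = k \/ SX (scaleset k (Abar A k 0)) s))
        /\ ((forall i, (i < k)%N -> T2 (Abar A k i)) -> T2 A)).
Proof.
move=> A_uniq k_gt1 C_dvd tAC; have k_gt0 : (0 < k)%N := ltnW k_gt1.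
have tiles_Abar_i i := tiles_Abar A_uniq k_gt0 C_dvd tAC (i := i).
have [P P_gt0 perCk] := tiles_periodic (tiles_Abar_i 0%N k_gt0).
split; first exact: maskpoly_decomp A_uniq k_gt0 C_dvd tAC.
split; first exact: tiles_Abar_i.
split; first by move=> i; exact: size_Abar A_uniq k_gt0 C_dvd tAC P P_gt0 perCk i.
split.
  move=> i j lt_ik lt_jk s.
  exact: SX_Abar_eq A_uniq k_gt0 C_dvd tAC P P_gt0 perCk i j s lt_ik lt_jk.
move=> k_prime; split.
  exact: SX_A_scaleset A_uniq k_gt0 C_dvd tAC P P_gt0 perCk k_prime.
exact: T2_A A_uniq k_gt0 C_dvd tAC P P_gt0 perCk k_prime.
Qed.
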